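(* Let $X$ be a real Banach space and let $C\subseteq B_{X^*}$ be a nonempty convex $w^*$-compact set such that every convex combination of slices of $C$ has diameter $2$. Then $K=\mathrm{co}(C\cup(-C))$ is a $w^*$-compact convex subset of $B_{X^*}$ such that every convex combination of slices of $K$ has diameter $2$.
   Context: For a bounded set $A$ in a Banach space $Z$ (here $Z=X^*$), a slice of $A$ is a nonempty set of the form $S(A,\phi,\alpha)=\{a\in A: \phi(a)>\sup_A\phi-\alpha\}$ with $\phi\in Z^*\setminus\{0\}$ and $\alpha>0$. A convex combination of slices of $A$ is a Minkowski sum $\sum_{i=1}^n\lambda_iS_i=\{\sum_i\lambda_is_i: s_i\in S_i\}$ where $S_i$ are slices of $A$, $\lambda_i>0$ and $\sum_i\lambda_i=1$. $\mathrm{co}$ denotes the convex hull. *)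

From HB Require Import structures.
From mathcomp Require Import all_boot all_order all_algebra.
From mathcomp Require Import all_classical all_reals all_analysis.
Set Implicit Arguments. Unset Strict Implicit. Unset Printing Implicit Defensive.
Import Order.TTheory GRing.Theory Num.Theory.
Import numFieldNormedType.Exports.
Local Open Scope classical_set_scope.
Local Open Scope ring_scope.

(* The weak-star topology on X^* is the topology of
   pointwise convergence, i.e. the subspace topology of {ptws X -> R}. *)

Section Dual.
Variables (R : realType) (X : normedModType R).

Definition is_linear_fun (f : X -> R) : Prop :=
  forall (a : R) (x y : X), f (a *: x + y) = a * f x + f y.

Definition Xdual : set (X -> R) :=
  [set f | is_linear_fun f /\ continuous f].

Definition dnorm (f : X -> R) : R :=
  sup [set `|f x| | x in [set x : X | `|x| <= 1]].

Definition dual_ball : set (X -> R) := [set f | Xdual f /\ dnorm f <= 1].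

Definition dcomb (a : R) (f g : X -> R) : X -> R := fun x => a * f x + g x.

(* Z^* for Z = X^*: norm-continuous (= bounded) linear functionals on X^*.
   Such a functional is given as a map (X -> R) -> R; only its values on
   X^* matter. *)
Definition bidual (phi : (X -> R) -> R) : Prop :=
  (forall (a : R) (f g : X -> R), Xdual f -> Xdual g ->
      phi (dcomb a f g) = a * phi f + phi g) /\
  (exists M : R, forall f, Xdual f -> `|phi f| <= M * dnorm f).

Definition bidual_nonzero (phi : (X -> R) -> R) : Prop :=
  exists f, Xdual f /\ phi f != 0.

Definition slice (A : set (X -> R)) (phi : (X -> R) -> R) (alpha : R)
  : set (X -> R) :=
  [set a | A a /\ phi a > sup [set phi b | b in A] - alpha].

Definition comb_slices (n : nat) (lam : 'I_n -> R) (S : 'I_n -> set (X -> R))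
  : set (X -> R) :=
  [set f | exists s : 'I_n -> X -> R, (forall i, S i (s i)) /\
           f = (fun x => \sum_(i < n) lam i * s i x)].

Definition ddiam (A : set (X -> R)) : R :=
  sup [set dnorm (fun x => f x - g x) | f in A & g in A].

Definition all_ccs_diam2 (A : set (X -> R)) : Prop :=
  forall (n : nat) (lam : 'I_n -> R) (phi : 'I_n -> (X -> R) -> R)
         (alpha : 'I_n -> R),
    (forall i, 0 < lam i) -> \sum_(i < n) lam i = 1 ->
    (forall i, bidual (phi i) /\ bidual_nonzero (phi i)) ->
    (forall i, 0 < alpha i) ->
    (forall i, slice A (phi i) (alpha i) !=set0) ->
    ddiam (comb_slices lam (fun i => slice A (phi i) (alpha i))) = 2.

Definition dconvex (A : set (X -> R)) : Prop :=
  forall f g (t : R), A f -> A g -> 0 <= t <= 1 ->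
    A (fun x => t * f x + (1 - t) * g x).

Definition dco (A : set (X -> R)) : set (X -> R) :=
  [set f | exists (n : nat) (lam : 'I_n -> R) (p : 'I_n -> X -> R),
     (forall i, 0 <= lam i) /\ \sum_(i < n) lam i = 1 /\
     (forall i, A (p i)) /\ f = (fun x => \sum_(i < n) lam i * p i x)].

Definition wstar_compact (A : set (X -> R)) : Prop :=
  @compact {ptws X -> R} A.

End Dual.

From HB Require Import structures.
From mathcomp Require Import all_boot all_order all_algebra.
From mathcomp Require Import all_classical all_reals all_analysis.
From mathcomp Require Import lra ring.
Set Implicit Arguments. Unset Strict Implicit. Unset Printing Implicit Defensive.
Import Order.TTheory GRing.Theory Num.Theory.
Import numFieldNormedType.Exports.
Local Open Scope classical_set_scope.
Local Open Scope ring_scope.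

(* By convexity of C, co(C u -C) consists of the functionals t c1 - (1 - t) c2
   with c1, c2 in C and t in [0, 1]; it is therefore the continuous image of the
   w*-compact set C x C x [0, 1], and lies in the unit ball.  For phi in Z^* one
   has sup_K phi <= max (sup_C phi, sup_C (- phi)), so every slice of K for phi
   contains either the slice of C for phi with the same alpha, or the
   reflection of the slice of C for - phi.  Reflecting a pair of points does not
   change their difference, so every distance realised in a convex combination of
   slices of C is realised in the corresponding combination of slices of K,
   whose diameter is thus at least 2; it is at most 2 since K lies in the ball. *)

Section DualSpace.
Variables (R : realType) (X : normedModType R).
Implicit Types (f g : X -> R) (phi : (X -> R) -> R).

Lemma linear_fun0 f : is_linear_fun f -> f 0 = 0.
Proof.
move=> lf; have := lf 1 0 0; rewrite scale1r addr0 mul1r => h.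
by apply: (addrI (f 0)); rewrite -h addr0.
Qed.

Lemma linear_funZ f a x : is_linear_fun f -> f (a *: x) = a * f x.
Proof. by move=> lf; have := lf a x 0; rewrite addr0 linear_fun0 // addr0. Qed.

(* Continuity at 0 gives [|f x| < 1] on a ball of radius [d]; rescale. *)
Lemma Xdual_bounded f : Xdual f -> exists B, forall x, `|x| <= 1 -> `|f x| <= B.
Proof.
move=> [lf cf].
have : f x @[x --> (0 : X)] --> (0 : R) by rewrite -(linear_fun0 lf); exact: cf.
move=> /cvgr0_norm_lt /(_ 1 ltr01) /nbhs_norm0P [d /= d0 Hd].
have d2 : 0 < d / 2 by rewrite divr_gt0.
exists (2 / d) => x x1.
have : `|(d / 2) *: x| < d.
  rewrite normrZ gtr0_norm //.
  by apply: (le_lt_trans (ler_wpM2l (ltW d2) x1)); rewrite mulr1; lra.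
move=> /Hd /=; rewrite linear_funZ // normrM gtr0_norm // => h.
have : `|f x| < 1 / (d / 2) by rewrite ltr_pdivlMr // mulrC.
by rewrite div1r invf_div => /ltW.
Qed.

Lemma Xdual0 : Xdual (fun _ : X => 0).
Proof.
split; first by move=> a x y; rewrite mulr0 addr0.
by move=> x; exact: cvg_cst.
Qed.

Lemma Xdual_dcomb a f g : Xdual f -> Xdual g -> Xdual (dcomb a f g).
Proof.
move=> [lf cf] [lg cg]; split; first by move=> b x y; rewrite /dcomb lf lg; ring.
by move=> x; apply: cvgD; [apply: cvgMl_tmp; exact: cf | exact: cg].
Qed.

Lemma dcomb_lincomb a b f g :
  (fun x => a * f x - b * g x) = dcomb a f (dcomb (- b) g (fun _ => 0)).
Proof. by apply: funext => x; rewrite /dcomb; ring. Qed.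

Lemma Xdual_lincomb a b f g :
  Xdual f -> Xdual g -> Xdual (fun x => a * f x - b * g x).
Proof.
move=> df dg; rewrite dcomb_lincomb.
by do 2?apply: Xdual_dcomb => //; exact: Xdual0.
Qed.

Lemma dnorm_le f B : (forall x, `|x| <= 1 -> `|f x| <= B) -> dnorm f <= B.
Proof.
move=> fB; apply: ge_sup; first by exists `|f 0|, 0 => //=; rewrite normr0.
by move=> _ [y y1 <-]; exact: fB.
Qed.

Lemma Xdual_le_dnorm f x : Xdual f -> `|x| <= 1 -> `|f x| <= dnorm f.
Proof.
move=> df x1; have [B fB] := Xdual_bounded df.
by apply: ub_le_sup; [exists B => _ [y y1 <-]; exact: fB | exists x].
Qed.

Lemma dnorm_ge0 f : Xdual f -> 0 <= dnorm f.
Proof. by move=> df; apply: le_trans (Xdual_le_dnorm (x := 0) df _); rewrite ?normr0. Qed.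

Lemma dual_ball_le1 f x : dual_ball f -> `|x| <= 1 -> `|f x| <= 1.
Proof. by move=> [df f1] x1; exact: le_trans (Xdual_le_dnorm df x1) f1. Qed.

Lemma dual_ball_lincomb a f g : 0 <= a <= 1 -> dual_ball f -> dual_ball g ->
  dual_ball (fun x => a * f x - (1 - a) * g x).
Proof.
move=> /andP[a0 a1] bf bg; split; first by apply: Xdual_lincomb; [case: bf | case: bg].
apply: dnorm_le => x x1; apply: (le_trans (ler_normB _ _)).
have a1' : 0 <= 1 - a by rewrite subr_ge0.
rewrite !normrM (ger0_norm a0) (ger0_norm a1').
have := dual_ball_le1 bf x1; have := dual_ball_le1 bg x1; nra.
Qed.

Lemma bidual0 phi : bidual phi -> phi (fun _ => 0) = 0.
Proof.
move=> [lp _]; have := lp 1 _ _ Xdual0 Xdual0.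
have -> : dcomb 1 (fun _ : X => 0) (fun _ => 0) = (fun _ => 0).
  by apply: funext => x; rewrite /dcomb mulr0 addr0.
by rewrite mul1r => h; apply: (addrI (phi (fun _ => 0))); rewrite -h addr0.
Qed.

Lemma bidual_lincomb phi a b f g : bidual phi -> Xdual f -> Xdual g ->
  phi (fun x => a * f x - b * g x) = a * phi f - b * phi g.
Proof.
move=> bp df dg; have [lp _] := bp; rewrite dcomb_lincomb.
rewrite lp //; last by apply: Xdual_dcomb => //; exact: Xdual0.
by rewrite lp ?bidual0 //; [ring | exact: Xdual0].
Qed.

Lemma bidualN phi f : bidual phi -> Xdual f -> phi (fun x => - f x) = - phi f.
Proof.
move=> bp df; have := bidual_lincomb 0 1 bp df df.
have -> : (fun x => 0 * f x - 1 * f x) = (fun x => - f x) by apply: funext => x; ring.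
by move=> ->; ring.
Qed.

Lemma bidual_opp phi : bidual phi -> bidual (fun f => - phi f).
Proof.
move=> [lp [M pM]]; split; first by move=> a f g df dg; rewrite lp //; ring.
by exists M => f df; rewrite normrN; exact: pM.
Qed.

Lemma bidual_nonzero_opp phi : bidual_nonzero phi -> bidual_nonzero (fun f => - phi f).
Proof. by move=> [f [df nz]]; exists f; split => //; rewrite oppr_eq0. Qed.

Lemma bidual_bounded phi (A : set (X -> R)) : bidual phi -> A `<=` @dual_ball R X ->
  has_ubound [set phi f | f in A].
Proof.
move=> [_ [M pM]] sA; exists `|M| => _ [f /sA [df f1] <-].
apply: le_trans (ler_norm _) (le_trans (pM f df) _).
apply: le_trans (ler_wpM2r (dnorm_ge0 df) (ler_norm M)) _.
by rewrite -[leRHS]mulr1 ler_wpM2l.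
Qed.

Lemma slice_neq0 (A : set (X -> R)) phi alpha : A !=set0 ->
  has_ubound [set phi f | f in A] -> 0 < alpha -> slice A phi alpha !=set0.
Proof.
move=> [f0 Af0] ubA a0.
have : sup [set phi f | f in A] - alpha < sup [set phi f | f in A].
  by rewrite ltrBlDr ltrDl.
by move=> /(sup_gt (ex_intro _ _ (ex_intro2 _ _ f0 Af0 erefl))) [_ [f Af <-]]; exists f.
Qed.

Definition dist_set (A : set (X -> R)) : set R :=
  [set dnorm (fun x => f x - g x) | f in A & g in A].

Lemma ddiam_eq2_sub (A B : set (X -> R)) : ubound (dist_set B) 2 ->
  dist_set A `<=` dist_set B -> ddiam A = 2 -> ddiam B = 2.
Proof.
move=> ubB sAB dA2.
have neA : dist_set A !=set0.
  apply/set0P/eqP => A0; move: dA2; rewrite /ddiam -/(dist_set A) A0 sup0 => /eqP.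
  by rewrite eq_sym pnatr_eq0.
have neB : dist_set B !=set0 by case: neA => y /sAB; exists y.
apply/eqP; rewrite eq_le ge_sup //= -dA2.
by apply: sup_le => //; [move=> y /sAB; exact: le_down | split=> //; exists 2].
Qed.

Lemma comb_slices_dist_le2 n (lam : 'I_n -> R) (S : 'I_n -> set (X -> R)) :
  (forall i, 0 < lam i) -> \sum_(i < n) lam i = 1 ->
  (forall i, S i `<=` @dual_ball R X) -> ubound (dist_set (comb_slices lam S)) 2.
Proof.
move=> lam0 lam1 SB _ [_ [s [Ss ->]] [_ [s' [Ss' ->]] <-]].
apply: dnorm_le => x x1; rewrite -sumrB.
apply: (le_trans (ler_norm_sum _ _ _)).
rewrite -[leRHS]mul1r -lam1 mulr_suml; apply: ler_sum => i _.
rewrite -mulrBr normrM gtr0_norm //; apply: ler_wpM2l; first exact: ltW.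
have := dual_ball_le1 (SB _ _ (Ss i)) x1; have := dual_ball_le1 (SB _ _ (Ss' i)) x1.
by move: (ler_normB (s i x) (s' i x)); lra.
Qed.

Lemma comb_slices_dist_sub n (lam : 'I_n -> R) (S T : 'I_n -> set (X -> R)) :
  (forall i s s', S i s -> S i s' -> exists uv : (X -> R) * (X -> R),
     [/\ T i uv.1, T i uv.2 & (fun x => uv.1 x - uv.2 x) = (fun x => s x - s' x)]) ->
  dist_set (comb_slices lam S) `<=` dist_set (comb_slices lam T).
Proof.
move=> ST _ [_ [s [Ss ->]] [_ [s' [Ss' ->]] <-]].
have [uv uvP] := choice (fun i => ST i _ _ (Ss i) (Ss' i)).
exists (fun x => \sum_(i < n) lam i * (uv i).1 x).
  by exists (fun i => (uv i).1); split => // i; case: (uvP i).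
exists (fun x => \sum_(i < n) lam i * (uv i).2 x).
  by exists (fun i => (uv i).2); split => // i; case: (uvP i).
congr dnorm; apply: funext => x; rewrite -!sumrB; apply: eq_bigr => i _.
by case: (uvP i) => _ _ /(congr1 (fun h => h x)) /= uvx; rewrite -!mulrBr uvx.
Qed.

End DualSpace.

Section PointwiseTopology.
Variables (R : realType) (X : normedModType R).
Let T := {ptws X -> R}.

Lemma ptws_eval_continuous (x : X) : continuous (fun f : T => f x).
Proof. by move=> f; have /pointwise_cvgP := @cvg_id _ (nbhs (f : T)); apply. Qed.

Definition segment_diff (p : (T * T) * R) : T :=
  fun x => p.2 * p.1.1 x - (1 - p.2) * p.1.2 x.

Lemma segment_diff_continuous : continuous segment_diff.
Proof.
move=> p; apply/pointwise_cvgP => x.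
have evalx (pr : (T * T) * R -> T) : continuous pr -> continuous (fun q => pr q x).
  move=> cpr q; apply: (@continuous_comp _ _ _ pr (fun f : T => f x)).
  - exact: cpr.
  - exact: ptws_eval_continuous.
have c11 : continuous (fun q : (T * T) * R => q.1.1).
  by move=> q; apply: (@continuous_comp _ _ _ fst fst); [exact: cvg_fst | exact: cvg_fst].
have c12 : continuous (fun q : (T * T) * R => q.1.2).
  by move=> q; apply: (@continuous_comp _ _ _ fst snd); [exact: cvg_fst | exact: cvg_snd].
change ((fun q : (T * T) * R => q.2 * q.1.1 x - (1 - q.2) * q.1.2 x) @ nbhs p -->
  segment_diff p x).
apply: cvgB; apply: cvgM; first exact: cvg_snd.
- exact: evalx c11 p.
- by apply: cvgB; [exact: cvg_cst | exact: cvg_snd].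
- exact: evalx c12 p.
Qed.

End PointwiseTopology.

Section SymmetricHull.
Variables (R : realType) (X : normedModType R) (C : set (X -> R)).
Hypotheses (C0 : C !=set0) (convC : dconvex C).

Definition symco : set (X -> R) :=
  [set f | exists t c1 c2, [/\ 0 <= t <= 1, C c1, C c2 &
     f = (fun x => t * c1 x - (1 - t) * c2 x)]].

Lemma symco_l c : C c -> symco c.
Proof.
move=> Cc; exists 1, c, c; split; rewrite ?ler01 ?lexx //.
by apply: funext => x; ring.
Qed.

Lemma symco_r c : C c -> symco (fun x => - c x).
Proof.
move=> Cc; exists 0, c, c; split; rewrite ?ler01 ?lexx //.
by apply: funext => x; ring.
Qed.

Lemma dconvex_conic2 p q c c' : 0 <= p -> 0 <= q -> C c -> C c' ->
  exists2 d, C d & (fun x => p * c x + q * c' x) = (fun x => (p + q) * d x).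
Proof.
move=> p0 q0 Cc Cc'; have [pq0|pq_neq0] := eqVneq (p + q) 0.
  have [-> ->] : p = 0 /\ q = 0 by lra.
  by exists c => //; apply: funext => x; ring.
have pq_gt0 : 0 < p + q by rewrite lt_neqAle eq_sym pq_neq0 addr_ge0.
have t01 : 0 <= p / (p + q) <= 1.
  by rewrite divr_ge0 ?addr_ge0 //= ler_pdivrMr // mul1r lerDl.
exists (fun x => p / (p + q) * c x + (1 - p / (p + q)) * c' x); first exact: convC.
by apply: funext => x; field.
Qed.

Lemma conic_comb_sym n (lam : 'I_n -> R) (p : 'I_n -> X -> R) :
  (forall i, 0 <= lam i) -> (forall i, (C `|` [set f | C (fun x => - f x)]) (p i)) ->
  exists a b c1 c2, [/\ 0 <= a /\ 0 <= b, a + b = \sum_(i < n) lam i, C c1, C c2 &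
    (fun x => \sum_(i < n) lam i * p i x) = (fun x => a * c1 x - b * c2 x)].
Proof.
elim: n lam p => [|n IH] lam p lam0 pC.
  have [c0 Cc0] := C0; exists 0, 0, c0, c0; split => //; first by rewrite big_ord0 addr0.
  by apply: funext => x; rewrite big_ord0; ring.
have [a [b [c1 [c2 [[a0 b0] ab Cc1 Cc2 E]]]]] :=
  IH (fun i => lam (widen_ord (leqnSn n) i)) (fun i => p (widen_ord (leqnSn n) i))
     (fun i => lam0 _) (fun i => pC _).
have sumE : (fun x => \sum_(i < n.+1) lam i * p i x) =
    (fun x => a * c1 x - b * c2 x + lam ord_max * p ord_max x).
  by apply: funext => x; rewrite big_ord_recr /= (congr1 (fun h => h x) E).
rewrite big_ord_recr /= -ab sumE.
have lm := lam0 ord_max; case: (pC ord_max) => Cp.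
- have [d Cd dE] := dconvex_conic2 a0 lm Cc1 Cp.
  exists (a + lam ord_max), b, d, c2; split; rewrite ?addr_ge0 //; first by ring.
  by apply: funext => x; rewrite -(congr1 (fun h => h x) dE); ring.
- have [d Cd dE] := dconvex_conic2 b0 lm Cc2 Cp.
  exists a, (b + lam ord_max), c1, d; split; rewrite ?addr_ge0 //; first by ring.
  by apply: funext => x; rewrite -(congr1 (fun h => h x) dE) /=; ring.
Qed.

Lemma dco_symco : dco (C `|` [set f | C (fun x => - f x)]) = symco.
Proof.
apply/seteqP; split => f.
  move=> [n [lam [p [lam0 [lam1 [pC ->]]]]]].
  have [a [b [c1 [c2 [[a0 b0] ab Cc1 Cc2 ->]]]]] := conic_comb_sym lam0 pC.
  exists a, c1, c2; split => //; first by rewrite a0 /=; lra.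
  by have -> : b = 1 - a by lra.
move=> [t [c1 [c2 [/andP[t0 t1] Cc1 Cc2 ->]]]].
exists 2, (fun i => if val i == 0%N then t else 1 - t),
  (fun i => if val i == 0%N then c1 else (fun x => - c2 x)).
split; first by move=> i; case: ifP; rewrite ?subr_ge0.
split; first by rewrite !big_ord_recr big_ord0 /= add0r addrC subrK.
split; last by apply: funext => x; rewrite !big_ord_recr big_ord0 /= add0r; ring.
move=> i; case: ifP => _; [by left | right].
by rewrite /= (_ : (fun x => - - c2 x) = c2) //; apply: funext => x; rewrite opprK.
Qed.

Lemma symco_convex : dconvex symco.
Proof.
move=> _ _ t [a [c1 [c2 [/andP[a0 a1] Cc1 Cc2 ->]]]]
  [a' [c1' [c2' [/andP[a0' a1'] Cc1' Cc2' ->]]]] /andP[t0 t1].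
have [t0' b0 b0'] : [/\ 0 <= 1 - t, 0 <= 1 - a & 0 <= 1 - a'] by split; lra.
have [d1 Cd1 d1E] := dconvex_conic2 (mulr_ge0 t0 a0) (mulr_ge0 t0' a0') Cc1 Cc1'.
have [d2 Cd2 d2E] := dconvex_conic2 (mulr_ge0 t0 b0) (mulr_ge0 t0' b0') Cc2 Cc2'.
exists (t * a + (1 - t) * a'), d1, d2; split => //; first by apply/andP; split; nra.
apply: funext => x.
have -> : 1 - (t * a + (1 - t) * a') = t * (1 - a) + (1 - t) * (1 - a') by ring.
rewrite -(congr1 (fun h => h x) d1E) -(congr1 (fun h => h x) d2E) /=; ring.
Qed.

Lemma symco_segment_diff :
  symco = @segment_diff R X @` ((C `*` C) `*` `[0, 1]%classic).
Proof.
apply/seteqP; split => f.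
  move=> [t [c1 [c2 [t01 Cc1 Cc2 ->]]]].
  by exists ((c1, c2), t); first by split => //=; rewrite in_itv.
move=> [[[c1 c2] t] [[Cc1 Cc2] /=]]; rewrite in_itv /= => t01 <-.
by exists t, c1, c2.
Qed.

Lemma symco_compact : wstar_compact C -> wstar_compact symco.
Proof.
move=> cptC; rewrite /wstar_compact symco_segment_diff.
apply: (@continuous_compact _ {ptws X -> R} (@segment_diff R X)).
  exact/continuous_subspaceT/segment_diff_continuous.
by apply: compact_setX; [exact: compact_setX | exact: segment_compact].
Qed.

Hypothesis ballC : C `<=` @dual_ball R X.

Lemma symco_sub_ball : symco `<=` @dual_ball R X.
Proof.
by move=> _ [t [c1 [c2 [t01 Cc1 Cc2 ->]]]]; apply: dual_ball_lincomb => //; exact: ballC.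
Qed.

Lemma sup_symco_le phi : bidual phi -> sup [set phi f | f in symco] <=
  Num.max (sup [set phi f | f in C]) (sup [set - phi f | f in C]).
Proof.
move=> bp; set m := Num.max _ _.
have [c0 Cc0] := C0.
apply: ge_sup; first by exists (phi c0), c0 => //; exact: symco_l.
move=> _ [_ [t [c1 [c2 [/andP[t0 t1] Cc1 Cc2 ->]]]] <-].
have [[d1 _] [d2 _]] := (ballC Cc1, ballC Cc2).
rewrite bidual_lincomb //.
have : phi c1 <= m.
  rewrite le_max; apply/orP; left; apply: ub_le_sup; last by exists c1.
  exact: bidual_bounded bp ballC.
have : - phi c2 <= m.
  rewrite le_max; apply/orP; right; apply: ub_le_sup; last by exists c2.
  exact: bidual_bounded (bidual_opp bp) ballC.
nra.
Qed.

Lemma slice_symco phi alpha : bidual phi ->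
  sup [set - phi f | f in C] <= sup [set phi f | f in C] ->
  slice C phi alpha `<=` slice symco phi alpha.
Proof.
move=> bp sup_le c [Cc cS]; split; first exact: symco_l.
by apply: le_lt_trans cS; rewrite lerD2r -(max_l sup_le) sup_symco_le.
Qed.

Lemma slice_symcoN phi alpha c : bidual phi ->
  sup [set phi f | f in C] <= sup [set - phi f | f in C] ->
  slice C (fun f => - phi f) alpha c -> slice symco phi alpha (fun x => - c x).
Proof.
move=> bp sup_le [Cc cS]; split; first exact: symco_r.
rewrite bidualN //; last by case: (ballC Cc).
by apply: le_lt_trans cS; rewrite lerD2r -(max_r sup_le) sup_symco_le.
Qed.

Lemma symco_ccs_diam2 : all_ccs_diam2 C -> all_ccs_diam2 symco.
Proof.
move=> diam2C n lam phi alpha lam0 lam1 phiP alpha0 _.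
pose pos i := sup [set - phi i f | f in C] <= sup [set phi i f | f in C].
pose psi i := if pos i then phi i else (fun f => - phi i f).
have psiP i : bidual (psi i) /\ bidual_nonzero (psi i).
  have [b nz] := phiP i; rewrite /psi; case: ifP => _ //.
  by split; [exact: bidual_opp | exact: bidual_nonzero_opp].
have sliceC i : slice C (psi i) (alpha i) !=set0.
  by apply: slice_neq0 => //; exact: bidual_bounded (psiP i).1 ballC.
apply: ddiam_eq2_sub (diam2C n lam psi alpha lam0 lam1 psiP alpha0 sliceC).
  by apply: comb_slices_dist_le2 => // i f [/symco_sub_ball].
apply: comb_slices_dist_sub => i s s'; have bp := (phiP i).1.
rewrite /psi; case: ifP => posi Ss Ss'.
  by exists (s, s'); split => //; exact: slice_symco.
have neg : sup [set phi i f | f in C] <= sup [set - phi i f | f in C].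
  by rewrite ltW // ltNge (negbT posi).
exists ((fun x => - s' x), (fun x => - s x)).
by split; [exact: slice_symcoN | exact: slice_symcoN | apply: funext => x /=; ring].
Qed.

End SymmetricHull.

Theorem mainTheorem11 (R : realType) (X : completeNormedModType R)
  (C : set (X -> R)) :
  C !=set0 -> dconvex C -> wstar_compact C -> C `<=` @dual_ball R X ->
  all_ccs_diam2 C ->
  let K := dco (C `|` [set f | C (fun x => - f x)]) in
  [/\ wstar_compact K, dconvex K, K `<=` @dual_ball R X & all_ccs_diam2 K].
Proof.
move=> C0 convC cptC ballC diam2C K; rewrite /K dco_symco //; split.
- exact: symco_compact.
- exact: symco_convex.
- exact: symco_sub_ball.
- exact: symco_ccs_diam2.
Qed.
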